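(* Let $f:[0,1]^n \to \mathbb{R}_+$ be a differentiable DR-submodular function and $\vec{x}^* \in [0,1]^n$ a maximizer of $f$. Consider a differentiable trajectory $(\vec{x}^{(t)},\vec{y}^{(t)})$ with $\vec{x}^{(t)} \le \vec{y}^{(t)}$ that follows the update rule: for every $t$ and every coordinate $i$ with $\nabla_i f(\vec{x}^{(t)}) > 0$ and $\nabla_i f(\vec{y}^{(t)}) < 0$, $$\dot{x}^{(t)}_i = \frac{\nabla_i f(\vec{x}^{(t)})}{\nabla_i f(\vec{x}^{(t)}) - \nabla_i f(\vec{y}^{(t)})}, \qquad \dot{y}^{(t)}_i = \frac{\nabla_i f(\vec{y}^{(t)})}{\nabla_i f(\vec{x}^{(t)}) - \nabla_i f(\vec{y}^{(t)})},$$ and $\dot{x}^{(t)}_i = \dot{y}^{(t)}_i = 0$ for every other coordinate $i$. Let $\vec{p}^{(t)}$ be the projection of $\vec{x}^*$ onto the box $[\vec{x}^{(t)},\vec{y}^{(t)}]$, i.e. $p^{(t)}_i = \min\{\max\{x^*_i, x^{(t)}_i\}, y^{(t)}_i\}$. Then at every time $t$ (where the derivatives exist) $$\frac12\left(\langle \nabla f(\vec{x}^{(t)}), \dot{\vec{x}}^{(t)}\rangle + \langle \nabla f(\vec{y}^{(t)}), \dot{\vec{y}}^{(t)}\rangle\right) + \langle \nabla f(\vec{p}^{(t)}), \dot{\vec{p}}^{(t)}\rangle \ge 0.$$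
   Context: A function $f:[0,1]^n \to \mathbb{R}_+$ is DR-submodular if for all $\vec{x}\le\vec{y}$ in $[0,1]^n$ (coordinate-wise), all $i\in[n]$ and $\delta\in[0,1]$ with $\vec{x}+\delta\vec{1}_{\{i\}}, \vec{y}+\delta\vec{1}_{\{i\}} \in [0,1]^n$, $f(\vec{x}+\delta\vec{1}_{\{i\}})-f(\vec{x}) \ge f(\vec{y}+\delta\vec{1}_{\{i\}})-f(\vec{y})$. For differentiable $f$ this is equivalent to $\nabla f(\vec{x}) \ge \nabla f(\vec{y})$ whenever $\vec{x}\le\vec{y}$. Dots denote time derivatives. *)

From HB Require Import structures.
From mathcomp Require Import all_boot all_order all_algebra.
From mathcomp Require Import all_classical all_reals all_analysis.
Set Implicit Arguments. Unset Strict Implicit. Unset Printing Implicit Defensive.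
Import Order.TTheory GRing.Theory Num.Theory.
Import numFieldNormedType.Exports.
Local Open Scope ring_scope.

(* Vectors of R^n are row vectors 'rV[R]_n; coordinate i of v is v ord0 i. *)

Definition in_box {R : realType} {n : nat} (v : 'rV[R]_n) : Prop :=
  forall i : 'I_n, 0 <= v ord0 i <= 1.

Definition vle {R : realType} {n : nat} (u v : 'rV[R]_n) : Prop :=
  forall i : 'I_n, u ord0 i <= v ord0 i.

Definition unitv {R : realType} {n : nat} (i : 'I_n) : 'rV[R]_n := delta_mx ord0 i.

Definition DR_submodular {R : realType} {n : nat} (f : 'rV[R]_n -> R) : Prop :=
  forall (x y : 'rV[R]_n) (i : 'I_n) (d : R),
    in_box x -> in_box y -> vle x y -> 0 <= d <= 1 ->
    in_box (x + d *: unitv i) -> in_box (y + d *: unitv i) ->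
    f (x + d *: unitv i) - f x >= f (y + d *: unitv i) - f y.

Definition grad {R : realType} {n : nat} (f : 'rV[R]_n -> R) (x : 'rV[R]_n) (i : 'I_n) : R :=
  'D_(unitv i) f x.

Definition grad_dot {R : realType} {n : nat} (f : 'rV[R]_n -> R) (x v : 'rV[R]_n) : R :=
  \sum_(i < n) grad f x i * v ord0 i.

Definition proj_box {R : realType} {n : nat} (xs x y : 'rV[R]_n) : 'rV[R]_n :=
  \row_i Num.min (Num.max (xs ord0 i) (x ord0 i)) (y ord0 i).

(* Coordinatewise, with a, b, c the i-th partial derivatives of f at x, y and
   p: DR-submodularity makes the gradient antitone, so x <= p <= y gives
   b <= c <= a.  Clamping is monotone in both bounds, so p_i' lies between
   min(x_i',0) + min(y_i',0) and max(x_i',0) + max(y_i',0); for an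
   updated coordinate x_i' = a/(a-b) > 0 > y_i' = b/(a-b), hence
   y_i' <= p_i' <= x_i'.  The bilinear c p_i' is then at least its value
   ab/(a-b) at the mixed corners, and the i-th summand is at least
   (a+b)^2/(2(a-b)) >= 0. *)

From HB Require Import structures.
From mathcomp Require Import all_boot all_order all_algebra.
From mathcomp Require Import all_classical all_reals all_analysis.
From mathcomp Require Import ring lra.
Set Implicit Arguments.
Unset Strict Implicit.
Unset Printing Implicit Defensive.

Import Order.TTheory GRing.Theory Num.Theory.
Import numFieldNormedType.Exports.
Local Open Scope classical_set_scope.
Local Open Scope ring_scope.

Section UnitShift.
Variables (R : realType) (n : nat).
Implicit Types (z w : 'rV[R]_n) (i j : 'I_n) (d : R).

Lemma shift_unitvE z i d j :
  (z + d *: unitv i) ord0 j = z ord0 j + (j == i)%:R * d.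
Proof. by rewrite !mxE eqxx mulrC. Qed.

Lemma in_box_shift z i d :
  in_box z -> 0 <= z ord0 i + d <= 1 -> in_box (z + d *: unitv i).
Proof.
move=> zB zid j; rewrite shift_unitvE.
by case: eqP => [->|_]; rewrite ?mul1r ?mul0r ?addr0 ?zB.
Qed.

Lemma vle_shift z w i d : vle z w -> vle (z + d *: unitv i) (w + d *: unitv i).
Proof. by move=> zw j; rewrite !shift_unitvE lerD2r. Qed.

Lemma vle_shift_ge0 z i d : 0 <= d -> vle z (z + d *: unitv i).
Proof.
by move=> d_ge0 j; rewrite shift_unitvE lerDl; case: eqP; rewrite ?mul1r ?mul0r.
Qed.

End UnitShift.

Section DRGradient.
Variables (R : realType) (n : nat) (f : 'rV[R]_n -> R).
Hypotheses (f_DR : DR_submodular f)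
  (f_diff : forall z, in_box z -> differentiable f z).

Lemma DR_quotient_antitone z w i h :
  in_box z -> in_box w -> vle z w -> h != 0 ->
  0 <= z ord0 i + h -> w ord0 i + h <= 1 ->
  h^-1 * (f (w + h *: unitv i) - f w) <= h^-1 * (f (z + h *: unitv i) - f z).
Proof.
move=> zB wB zw h_neq0 zih wih.
have /andP[zi0 zi1] := zB i; have /andP[wi0 wi1] := wB i; have zwi := zw i.
have zhB : in_box (z + h *: unitv i) by apply: in_box_shift => //; lra.
have whB : in_box (w + h *: unitv i) by apply: in_box_shift => //; lra.
case: (ltrgt0P h) h_neq0 => // [h_gt0 | h_lt0] _.
  apply: ler_wpM2l; first by rewrite invr_ge0 ltW.
  by apply: f_DR => //; lra.
apply: ler_wnM2l; first by rewrite invr_le0 ltW.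
have unshift v : v + h *: unitv i + - h *: unitv i = v.
  by rewrite -addrA -scalerDl subrr scale0r addr0.
have := f_DR (i := i) (d := - h) zhB whB (vle_shift i h zw); rewrite !unshift.
have h_range : 0 <= - h <= 1 by lra.
by move=> /(_ h_range zB wB); lra.
Qed.

Lemma grad_cvg z i : in_box z ->
  (fun h => h^-1 * (f (z + h *: unitv i) - f z)) @ 0^' --> grad f z i.
Proof.
move=> zB; have : derivable f z (unitv i).
  by apply: diff_derivable; exact: f_diff.
suff -> : (fun h => h^-1 * (f (z + h *: unitv i) - f z)) =
          (fun h => h^-1 *: ((f \o shift z) (h *: unitv i) - f z)) by [].
by apply: funext => h /=; rewrite [z + _]addrC.
Qed.

Lemma grad_antitone_right z w i : in_box z -> in_box w -> vle z w ->
  w ord0 i < 1 -> grad f w i <= grad f z i.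
Proof.
move=> zB wB zw wi_lt1; have /andP[zi_ge0 _] := zB i.
apply: (ler_cvg_to (cvg_dnbhs_at_right (grad_cvg (i := i) wB))
  (cvg_dnbhs_at_right (grad_cvg (i := i) zB))).
near=> h.
have h_gt0 : 0 < h by near: h; exact: nbhs_right_gt.
have h_small : h < 1 - w ord0 i by near: h; apply: nbhs_right_lt; lra.
by apply: DR_quotient_antitone; rewrite ?gt_eqF //; lra.
Unshelve. all: end_near.
Qed.

Lemma grad_antitone_left z w i : in_box z -> in_box w -> vle z w ->
  0 < z ord0 i -> grad f w i <= grad f z i.
Proof.
move=> zB wB zw zi_gt0; have /andP[_ wi_le1] := wB i.
apply: (ler_cvg_to (cvg_dnbhs_at_left (grad_cvg (i := i) wB))
  (cvg_dnbhs_at_left (grad_cvg (i := i) zB))).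
near=> h.
have h_lt0 : h < 0 by near: h; exact: nbhs_left_lt.
have h_small : - z ord0 i < h by near: h; apply: nbhs_left_gt; lra.
by apply: DR_quotient_antitone; rewrite ?lt_eqF //; lra.
Unshelve. all: end_near.
Qed.

Lemma grad_antitone z w i : in_box z -> in_box w -> vle z w ->
  grad f w i <= grad f z i.
Proof.
move=> zB wB zw.
have [wi_lt1 | wi_ge1] := ltP (w ord0 i) 1; first exact: grad_antitone_right.
have [zi_gt0 | zi_le0] := ltP 0 (z ord0 i); first exact: grad_antitone_left.
have /andP[zi_ge0 _] := zB i; have /andP[_ wi_le1] := wB i.
(* Here z_i = 0 and w_i = 1, so no one-sided quotient exists at both points:
   compare both with the midpoint along coordinate i. *)
pose m := z + 2^-1 *: unitv i.
have mi : m ord0 i = 2^-1 by rewrite shift_unitvE eqxx mul1r; lra.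
have mB : in_box m by apply: in_box_shift => //; lra.
have zm : vle z m by apply: vle_shift_ge0.
have mw : vle m w.
  move=> j; rewrite shift_unitvE.
  case: eqP => [->|_]; last by rewrite mul0r addr0.
  by rewrite mul1r; lra.
apply: (@le_trans _ _ (grad f m i)).
  by apply: grad_antitone_left => //; lra.
by apply: grad_antitone_right => //; lra.
Qed.

End DRGradient.

Section Clamp.
Variable R : realFieldType.
Implicit Types c u v : R.

Lemma min_max_between c u v : u <= v -> u <= Num.min (Num.max c u) v <= v.
Proof.
move=> uv; rewrite /Num.min /Num.max /Order.min /Order.max.
by case: (ltP c u) => ?; case: ltP => ?; apply/andP; split; lra.
Qed.

Lemma min_maxB_le c u v (u' v' : R) :
  Num.min (Num.max c u') v' - Num.min (Num.max c u) v <=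
  Num.max (u' - u) 0 + Num.max (v' - v) 0.
Proof.
set P := Num.max _ 0; set Q := Num.max _ 0.
have uP : u' - u <= P by rewrite le_max lexx.
have vQ : v' - v <= Q by rewrite le_max lexx.
have P_ge0 : 0 <= P by rewrite le_max lexx orbT.
have Q_ge0 : 0 <= Q by rewrite le_max lexx orbT.
clearbody P Q; rewrite /Num.min /Num.max /Order.min /Order.max.
by case: (ltP c u') => ?; case: (ltP c u) => ?; repeat case: ltP => ?; lra.
Qed.

Lemma min_maxB_ge c u v (u' v' : R) :
  Num.min (u' - u) 0 + Num.min (v' - v) 0 <=
  Num.min (Num.max c u') v' - Num.min (Num.max c u) v.
Proof.
set P := Num.min _ 0; set Q := Num.min _ 0.
have uP : P <= u' - u by rewrite ge_min lexx.
have vQ : Q <= v' - v by rewrite ge_min lexx.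
have P_le0 : P <= 0 by rewrite ge_min lexx orbT.
have Q_le0 : Q <= 0 by rewrite ge_min lexx orbT.
clearbody P Q; rewrite /Num.min /Num.max /Order.min /Order.max.
by case: (ltP c u') => ?; case: (ltP c u) => ?; repeat case: ltP => ?; lra.
Qed.

End Clamp.

Section MaxMin0Limits.
Context (R : realType) (T : Type) (F : set_system T) {F_filter : Filter F}.

Lemma cvg_max0 (g : T -> R) (l : R) :
  g @ F --> l -> (fun s => Num.max (g s) 0) @ F --> Num.max l 0.
Proof.
move=> gl.
have max0_cont : {for l, continuous (fun r : R => Num.max r 0)}.
  by apply: (continuous_max (f := id) (g := cst 0));
    [exact: cvg_id | exact: cvg_cst].
exact: (continuous_cvg _ max0_cont gl).
Qed.

Lemma cvg_min0 (g : T -> R) (l : R) :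
  g @ F --> l -> (fun s => Num.min (g s) 0) @ F --> Num.min l 0.
Proof.
move=> gl.
have min0_cont : {for l, continuous (fun r : R => Num.min r 0)}.
  by apply: (continuous_min (f := id) (g := cst 0));
    [exact: cvg_id | exact: cvg_cst].
exact: (continuous_cvg _ min0_cont gl).
Qed.

End MaxMin0Limits.

Lemma derive1_coord_cvg_right (R : realType) n (Z : R -> 'rV[R]_n) t i :
  derivable Z t 1 ->
  (fun h => h^-1 * (Z (h + t) ord0 i - Z t ord0 i)) @ 0^'+ -->
    derive1 Z t ord0 i.
Proof.
move=> dZ; rewrite derive1E; apply: cvg_dnbhs_at_right.
have := continuous_cvg (dnbhs_filter _) (@coord_continuous R 1 n ord0 i _) dZ.
suff -> : (fun h => h^-1 * (Z (h + t) ord0 i - Z t ord0 i)) =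
    (fun M : 'rV[R]_n => M ord0 i) \o
    (fun h => h^-1 *: ((Z \o shift t) (h *: 1) - Z t)) by [].
by apply: funext => h; rewrite /= !mxE [h *: 1]mulr1.
Qed.

Lemma derive1_proj_box_bounds (R : realType) n (xs : 'rV[R]_n)
    (X Y : R -> 'rV[R]_n) t i :
  derivable X t 1 -> derivable Y t 1 ->
  derivable (fun s => proj_box xs (X s) (Y s)) t 1 ->
  Num.min (derive1 X t ord0 i) 0 + Num.min (derive1 Y t ord0 i) 0
  <= derive1 (fun s => proj_box xs (X s) (Y s)) t ord0 i
  <= Num.max (derive1 X t ord0 i) 0 + Num.max (derive1 Y t ord0 i) 0.
Proof.
move=> dX dY dP.
have qX := derive1_coord_cvg_right (i := i) dX.
have qY := derive1_coord_cvg_right (i := i) dY.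
have qP := derive1_coord_cvg_right (i := i) dP.
apply/andP; split.
  apply: (ler_cvg_to (cvgD (cvg_min0 qX) (cvg_min0 qY)) qP).
  near=> h; have hinv_ge0 : 0 <= h^-1.
    by rewrite invr_ge0 ltW //; near: h; exact: nbhs_right_gt.
  have := ler_wpM2l hinv_ge0 (min_maxB_ge (xs ord0 i)
    (X t ord0 i) (Y t ord0 i) (X (h + t) ord0 i) (Y (h + t) ord0 i)).
  by rewrite [X in X <= _ -> _]mulrDr !minr_pMr ?mulr0 // !mxE.
apply: (ler_cvg_to qP (cvgD (cvg_max0 qX) (cvg_max0 qY))).
near=> h; have hinv_ge0 : 0 <= h^-1.
  by rewrite invr_ge0 ltW //; near: h; exact: nbhs_right_gt.
have := ler_wpM2l hinv_ge0 (min_maxB_le (xs ord0 i)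
  (X t ord0 i) (Y t ord0 i) (X (h + t) ord0 i) (Y (h + t) ord0 i)).
by rewrite [X in _ <= X -> _]mulrDr !maxr_pMr ?mulr0 // !mxE.
Unshelve. all: end_near.
Qed.

Lemma update_rule_term_ge0 (R : realFieldType) (a b c dx dy dp : R) :
  (if (0 < a) && (b < 0) then dx = a / (a - b) /\ dy = b / (a - b)
   else dx = 0 /\ dy = 0) ->
  b <= c <= a ->
  Num.min dx 0 + Num.min dy 0 <= dp <= Num.max dx 0 + Num.max dy 0 ->
  0 <= (a * dx + b * dy) / 2 + c * dp.
Proof.
move=> + /andP[bc ca] /andP[dp_ge dp_le].
case: ifP => [/andP[a_gt0 b_lt0] [dxE dyE] | _ [dx0 dy0]]; last first.
  move: dp_ge dp_le; rewrite dx0 dy0 minxx maxxx addr0 => dp_ge dp_le.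
  have -> : dp = 0 by lra.
  by rewrite !mulr0 !addr0 mul0r.
set w := (a - b)^-1 in dxE dyE.
have w_gt0 : 0 < w by rewrite invr_gt0; lra.
have dx_gt0 : 0 < dx by rewrite dxE mulr_gt0.
have dy_lt0 : dy < 0 by rewrite dyE pmulr_llt0.
move: dp_ge dp_le; rewrite (min_r (ltW dx_gt0)) (min_l (ltW dy_lt0)).
rewrite (max_l (ltW dx_gt0)) (max_r (ltW dy_lt0)) add0r addr0 => dp_ge dp_le.
rewrite dxE dyE in dp_ge dp_le.
(* c is a convex combination of a and b, so the bilinear c * dp is at least
   its common value a * b * w at the two mixed corners. *)
have corner : (a - b) * (c * dp - a * b * w) =
    (c - b) * (a * (dp - b * w)) + (a - c) * (- b * (a * w - dp)) by ring.
have cdp_ge : 0 <= c * dp - a * b * w.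
  rewrite -(pmulr_rge0 _ (_ : 0 < a - b)) ?corner; last by lra.
  by apply: addr_ge0; apply: mulr_ge0; rewrite ?mulr_ge0 //; lra.
have sq_ge0 : 0 <= (a + b) ^+ 2 * w by rewrite mulr_ge0 ?sqr_ge0 ?ltW.
by rewrite dxE dyE; lra.
Qed.

Lemma proj_box_between (R : realType) n (xs x y : 'rV[R]_n) :
  vle x y -> vle x (proj_box xs x y) /\ vle (proj_box xs x y) y.
Proof.
move=> xy; split=> j; rewrite mxE;
  by case/andP: (min_max_between (xs ord0 j) (xy j)).
Qed.

Lemma in_box_between (R : realType) n (u v w : 'rV[R]_n) :
  in_box u -> in_box w -> vle u v -> vle v w -> in_box v.
Proof.
move=> uB wB uv vw j.
have /andP[uj_ge0 _] := uB j; have /andP[_ wj_le1] := wB j.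
by have := uv j; have := vw j; lra.
Qed.

Theorem lemma4 (R : realType) (n : nat) (f : 'rV[R]_n -> R) (xs : 'rV[R]_n)
  (x y : R -> 'rV[R]_n) (t : R) :
  (forall z, in_box z -> 0 <= f z) ->
  (forall z, in_box z -> differentiable f z) ->
  DR_submodular f ->
  in_box xs -> (forall z, in_box z -> f z <= f xs) ->
  in_box (x t) -> in_box (y t) -> vle (x t) (y t) ->
  derivable x t 1 -> derivable y t 1 ->
  (forall i : 'I_n,
     let a := grad f (x t) i in
     let b := grad f (y t) i in
     if (0 < a) && (b < 0) then
       (derive1 x t) ord0 i = a / (a - b) /\ (derive1 y t) ord0 i = b / (a - b)
     else
       (derive1 x t) ord0 i = 0 /\ (derive1 y t) ord0 i = 0) ->
  derivable (fun s => proj_box xs (x s) (y s)) t 1 ->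
  (grad_dot f (x t) (derive1 x t) + grad_dot f (y t) (derive1 y t)) / 2
    + grad_dot f (proj_box xs (x t) (y t)) (derive1 (fun s => proj_box xs (x s) (y s)) t)
    >= 0.
Proof.
move=> _ f_diff f_DR _ _ xB yB xy dx dy update dp.
have [xp py] := proj_box_between xs xy.
have pB := in_box_between xB yB xp py.
rewrite /grad_dot -big_split /= mulr_suml -big_split /=; apply: sumr_ge0 => i _.
apply: update_rule_term_ge0 (update i) _ (derive1_proj_box_bounds i dx dy dp).
by rewrite !grad_antitone.
Qed.
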